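(* $\mathrm{Log}_{>1}(\mathbb{R})$ does not have the finite model property: there is a modal formula that is not in $\mathrm{Log}_{>1}(\mathbb{R})$ but is valid in every finite frame in which all formulas of $\mathrm{Log}_{>1}(\mathbb{R})$ are valid.
   Context: Modal formulas are built from a countable set of propositional variables using $\bot$, $\to$ and one unary modality $\lozenge$. A frame is a pair $(X,R)$; a valuation assigns subsets of $X$ to variables; $x\models\lozenge\varphi$ iff there is $y$ with $xRy$ and $y\models\varphi$. A formula is valid in a frame if true at every point under every valuation. $\mathrm{Log}_{>1}(\mathbb{R})$ is the set of formulas valid in the frame $(\mathbb{R},R_{>1})$ with $xR_{>1}y$ iff $|x-y|>1$. A logic $L$ has the finite model property if it is the set of formulas valid in some class of finite frames (equivalently, in the class of all finite frames validating $L$). *)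

From Stdlib Require Import Reals List.
Open Scope R_scope.

Inductive form : Type :=
  | Var : nat -> form
  | Bot : form
  | Imp : form -> form -> form
  | Dia : form -> form.

Fixpoint sat {X : Type} (Rel : X -> X -> Prop) (V : nat -> X -> Prop)
    (x : X) (f : form) : Prop :=
  match f with
  | Var n => V n x
  | Bot => False
  | Imp a b => sat Rel V x a -> sat Rel V x b
  | Dia a => exists y, Rel x y /\ sat Rel V y a
  end.

Definition valid {X : Type} (Rel : X -> X -> Prop) (f : form) : Prop :=
  forall (V : nat -> X -> Prop) (x : X), sat Rel V x f.

Definition R_gt1 (x y : R) : Prop := Rabs (x - y) > 1.

Definition Log_gt1_R (f : form) : Prop := valid R_gt1 f.

Definition finite_type (X : Type) : Prop := exists l : list X, forall x : X, In x l.

From Stdlib Require Import Reals List Lra Lia Classical ClassicalEpsilon FinFun.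
Open Scope R_scope.

(* Since any two reals are joined by a path of two R_{>1}-steps, [Box2] is the universal
   modality of (R, R_{>1}). The formula [alpha] in the variables p0, p1 is satisfiable there,
   and forces its layers [T 1], [T 2], ... to be consecutive half-open intervals of length < 1
   marching off to one side, hence nonempty and pairwise disjoint. For each n, [psi n] denies
   that n fresh variables cut the frame into cells that are pure for p0, p1 and homogeneous
   for the relation: the same-cell relation would then be a bisimulation, making every layer
   a union of cells, which n cells cannot provide for infinitely many disjoint layers. So every
   [psi n] lies in Log_{>1}(R), while on a finite frame with n points that validates them,
   naming the points by the cell variables refutes [alpha] everywhere. *)

Definition Neg (a : form) : form := Imp a Bot.
Definition Top : form := Neg Bot.
Definition And (a b : form) : form := Neg (Imp a (Neg b)).
Definition Or (a b : form) : form := Imp (Neg a) b.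
Definition Box (a : form) : form := Neg (Dia (Neg a)).
Definition Box2 (a : form) : form := Box (Box a).
Definition Dia2 (a : form) : form := Dia (Dia a).
Definition Conj (l : list form) : form := fold_right And Top l.
Definition Disj (l : list form) : form := fold_right Or Bot l.

Section Semantics.
Variables (X : Type) (Rel : X -> X -> Prop) (V : nat -> X -> Prop).

Lemma sat_And x a b : sat Rel V x (And a b) <-> sat Rel V x a /\ sat Rel V x b.
Proof. simpl; tauto. Qed.

Lemma sat_Or x a b : sat Rel V x (Or a b) <-> sat Rel V x a \/ sat Rel V x b.
Proof. simpl; tauto. Qed.

Lemma sat_Box x a : sat Rel V x (Box a) <-> forall y, Rel x y -> sat Rel V y a.
Proof.
  simpl; split.
  - intros H y Hxy. apply NNPP; intro Hy. apply H; exists y; auto.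
  - intros H [y [Hxy Hy]]. apply Hy, H, Hxy.
Qed.

Lemma sat_Conj x l : sat Rel V x (Conj l) <-> forall f, In f l -> sat Rel V x f.
Proof.
  induction l as [|a l IH]; cbn [Conj fold_right].
  - simpl; tauto.
  - rewrite sat_And; fold (Conj l); rewrite IH. simpl.
    split; [intros [Ha Hl] f [<-|Hf]; auto | auto].
Qed.

Lemma sat_Disj x l : sat Rel V x (Disj l) <-> exists f, In f l /\ sat Rel V x f.
Proof.
  induction l as [|a l IH]; cbn [Disj fold_right].
  - simpl; firstorder.
  - rewrite sat_Or; fold (Disj l); rewrite IH. simpl.
    split; [intros [Ha|[f [Hf Hx]]]; eauto | intros [f [[<-|Hf] Hx]]; eauto].
Qed.

Lemma sat_Box2_of_all x a : (forall z, sat Rel V z a) -> sat Rel V x (Box2 a).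
Proof. intro Ha. apply sat_Box; intros y _. apply sat_Box; auto. Qed.

Lemma sat_Dia2_ex x a : sat Rel V x (Dia2 a) -> exists z, sat Rel V z a.
Proof. intros [y [_ [z [_ Hz]]]]; eauto. Qed.

Section TwoStep.
Hypothesis Rel_two_step : forall x z, exists y, Rel x y /\ Rel y z.

Lemma sat_Box2_total x a : sat Rel V x (Box2 a) <-> forall z, sat Rel V z a.
Proof.
  split; [|apply sat_Box2_of_all].
  intros Ha z. destruct (Rel_two_step x z) as [y [Hxy Hyz]].
  exact (proj1 (sat_Box _ _) (proj1 (sat_Box _ _) Ha y Hxy) z Hyz).
Qed.

Lemma sat_Dia2_total x a : sat Rel V x (Dia2 a) <-> exists z, sat Rel V z a.
Proof.
  split; [apply sat_Dia2_ex|].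
  intros [z Hz]. destruct (Rel_two_step x z) as [y [Hxy Hyz]].
  exists y; split; [|exists z]; auto.
Qed.

End TwoStep.
End Semantics.

Fixpoint vars_below (m : nat) (f : form) : Prop :=
  match f with
  | Var k => (k < m)%nat
  | Bot => True
  | Imp a b => vars_below m a /\ vars_below m b
  | Dia a => vars_below m a
  end.

Section Bisimulation.
Variables (X Y : Type) (RX : X -> X -> Prop) (RY : Y -> Y -> Prop).
Variables (VX : nat -> X -> Prop) (VY : nat -> Y -> Prop) (m : nat) (Z : X -> Y -> Prop).
Hypothesis Z_atoms : forall k x y, (k < m)%nat -> Z x y -> (VX k x <-> VY k y).
Hypothesis Z_forth : forall x y x', Z x y -> RX x x' -> exists y', RY y y' /\ Z x' y'.
Hypothesis Z_back : forall x y y', Z x y -> RY y y' -> exists x', RX x x' /\ Z x' y'.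

Lemma sat_bisim f : vars_below m f ->
  forall x y, Z x y -> (sat RX VX x f <-> sat RY VY y f).
Proof.
  induction f as [k| |a IHa b IHb|a IHa]; simpl; intros Hm x y Hxy.
  - auto.
  - tauto.
  - rewrite (IHa (proj1 Hm) x y Hxy), (IHb (proj2 Hm) x y Hxy). tauto.
  - split.
    + intros [x' [Hxx' Hx']]. destruct (Z_forth x y x' Hxy Hxx') as [y' [Hyy' Hz]].
      exists y'. split; [|apply (IHa Hm x')]; auto.
    + intros [y' [Hyy' Hy']]. destruct (Z_back x y y' Hxy Hyy') as [x' [Hxx' Hz]].
      exists x'. split; [|apply (IHa Hm x' y')]; auto.
Qed.

End Bisimulation.

Lemma sat_agree (X : Type) (Rel : X -> X -> Prop) (V W : nat -> X -> Prop) m f x :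
  (forall k y, (k < m)%nat -> (V k y <-> W k y)) -> vars_below m f ->
  (sat Rel V x f <-> sat Rel W x f).
Proof.
  intros HVW Hf. apply (sat_bisim X X Rel Rel V W m eq); auto.
  - intros k y z Hk <-. auto.
  - intros y z y' <- Hyy'. eauto.
  - intros y z z' <- Hzz'. eauto.
Qed.

Section Cells.
Variables (X : Type) (Rel : X -> X -> Prop) (V : nat -> X -> Prop) (m : nat).
Variable (C : nat -> X -> Prop).
Hypothesis C_pure : forall i k x y, (k < m)%nat -> C i x -> C i y -> V k x -> V k y.
Hypothesis C_hom : forall i j x y, C i x -> C i y ->
  (exists x', Rel x x' /\ C j x') -> exists y', Rel y y' /\ C j y'.
Hypothesis C_cover : forall x, exists i, C i x.

Lemma sat_same_cell f i x y : vars_below m f -> C i x -> C i y ->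
  (sat Rel V x f <-> sat Rel V y f).
Proof.
  intros Hf Hx Hy.
  apply (sat_bisim X X Rel Rel V V m (fun x y => exists i, C i x /\ C i y)); eauto.
  - intros k x' y' Hk [i' [Hx' Hy']]. split; eauto.
  - intros x1 y1 x2 [i' [Hx1 Hy1]] Hx12. destruct (C_cover x2) as [j Hx2].
    destruct (C_hom i' j x1 y1 Hx1 Hy1 (ex_intro _ x2 (conj Hx12 Hx2))) as [y2 [Hy12 Hy2]].
    eauto.
  - intros x1 y1 y2 [i' [Hx1 Hy1]] Hy12. destruct (C_cover y2) as [j Hy2].
    destruct (C_hom i' j y1 x1 Hy1 Hx1 (ex_intro _ y2 (conj Hy12 Hy2))) as [x2 [Hx12 Hx2]].
    eauto.
Qed.

End Cells.

Lemma no_bounded_injection n (c : nat -> nat) :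
  (forall k, (c k < n)%nat) -> Injective c -> False.
Proof.
  intros Hc Hinj.
  assert (Hlen : (length (map c (seq 0 (S n))) <= length (seq 0 n))%nat).
  { apply NoDup_incl_length.
    - apply Injective_map_NoDup; [exact Hinj | apply seq_NoDup].
    - intros i Hi. apply in_map_iff in Hi as [k [<- _]]. apply in_seq. split; [lia | apply Hc]. }
  rewrite length_map, !length_seq in Hlen. lia.
Qed.

Lemma finite_cover_disjoint_family (X : Type) n (C S : nat -> X -> Prop) :
  (forall x, exists i, (i < n)%nat /\ C i x) ->
  (forall k i x y, C i x -> C i y -> S k x -> S k y) ->
  (forall k, exists x, S k x) ->
  (forall j k x, S j x -> S k x -> j = k) -> False.
Proof.
  intros Hcover Hunion Hne Hdisj.
  assert (Hcell : forall k, exists i, (i < n)%nat /\ exists x, S k x /\ C i x).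
  { intro k. destruct (Hne k) as [x Hx]. destruct (Hcover x) as [i [Hi Hix]]. eauto. }
  destruct (choice _ Hcell) as [c Hc].
  apply (no_bounded_injection n c); [apply Hc|].
  intros j k Hjk. destruct (Hc j) as [_ [x [Hx Hcx]]]. destruct (Hc k) as [_ [y [Hy Hcy]]].
  rewrite Hjk in Hcx. exact (Hdisj j k y (Hunion j (c k) x y Hcx Hcy Hx) Hy).
Qed.

Lemma R_gt1_iff x y : R_gt1 x y <-> y < x - 1 \/ x + 1 < y.
Proof.
  unfold R_gt1, Rabs. destruct (Rcase_abs (x - y)); split; intro H; lra.
Qed.

Lemma not_R_gt1_iff x y : ~ R_gt1 x y <-> x - 1 <= y <= x + 1.
Proof. rewrite R_gt1_iff. lra. Qed.

Lemma R_gt1_opp x y : R_gt1 (- x) (- y) <-> R_gt1 x y.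
Proof. rewrite !R_gt1_iff. lra. Qed.

Lemma R_gt1_two_step x z : exists y, R_gt1 x y /\ R_gt1 y z.
Proof.
  exists (Rabs x + Rabs z + 2). rewrite !R_gt1_iff.
  pose proof (Rle_abs x). pose proof (Rle_abs z). pose proof (Rabs_pos x). pose proof (Rabs_pos z).
  lra.
Qed.

Lemma sat_Box2_R V x a : sat R_gt1 V x (Box2 a) <-> forall z, sat R_gt1 V z a.
Proof. exact (sat_Box2_total R R_gt1 V R_gt1_two_step x a). Qed.

Lemma sat_Dia2_R V x a : sat R_gt1 V x (Dia2 a) <-> exists z, sat R_gt1 V z a.
Proof. exact (sat_Dia2_total R R_gt1 V R_gt1_two_step x a). Qed.

Lemma sat_reflect V f x : vars_below 2 f ->
  (sat R_gt1 (fun k z => V k (- z)) x f <-> sat R_gt1 V (- x) f).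
Proof.
  intro Hf. apply (sat_bisim R R R_gt1 R_gt1 _ V 2 (fun x y => y = - x)); auto.
  - intros k y z _ ->. reflexivity.
  - intros y z y' -> Hyy'. exists (- y'). rewrite R_gt1_opp. auto.
  - intros y z z' -> Hzz'. exists (- z'). rewrite <- R_gt1_opp, !Ropp_involutive. auto.
Qed.

Definition Narrow (a : form) : form := Box2 (Imp a (Box (Neg a))).

Fixpoint T (k : nat) : form :=
  match k with
  | 0 => Var 0
  | 1 => And (Box (Neg (Var 0))) (Dia (Var 1))
  | S (S k' as k1) => And (And (Box (Neg (T k1))) (Neg (T k1))) (Dia (T k'))
  end.

Definition alpha : form :=
  And (Narrow (Or (Var 0) (Var 1)))
 (And (Dia2 (Var 0))
 (And (Dia2 (Var 1))
 (And (Narrow (T 1))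
 (And (Dia2 (T 1)) (Dia2 (T 2)))))).

Lemma vars_below_T k : vars_below 2 (T k).
Proof.
  enough (H : vars_below 2 (T k) /\ vars_below 2 (T (S k))) by apply H.
  induction k as [|k [IH1 IH2]]; simpl in *; repeat split; auto; lia.
Qed.

Lemma vars_below_alpha : vars_below 2 alpha.
Proof. simpl; repeat split; lia. Qed.

Section Layers.
Variables (X : Type) (Rel : X -> X -> Prop) (V : nat -> X -> Prop).

Lemma sat_T1 x : sat Rel V x (T 1) <->
  (forall y, Rel x y -> ~ V 0%nat y) /\ exists y, Rel x y /\ V 1%nat y.
Proof. cbn [T]. rewrite sat_And, sat_Box. reflexivity. Qed.

Lemma sat_TSS k x : sat Rel V x (T (S (S k))) <->
  (forall y, Rel x y -> ~ sat Rel V y (T (S k))) /\ ~ sat Rel V x (T (S k)) /\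
  exists y, Rel x y /\ sat Rel V y (T k).
Proof.
  change (T (S (S k))) with (And (And (Box (Neg (T (S k)))) (Neg (T (S k)))) (Dia (T k))).
  rewrite !sat_And, sat_Box. simpl. tauto.
Qed.

End Layers.

Lemma sat_Narrow_R V x a : sat R_gt1 V x (Narrow a) <->
  forall y z, sat R_gt1 V y a -> sat R_gt1 V z a -> ~ R_gt1 y z.
Proof.
  unfold Narrow. rewrite sat_Box2_R. split.
  - intros H y z Hy Hz Hyz.
    assert (Hbox : sat R_gt1 V y (Box (Neg a))) by exact (H y Hy).
    exact (proj1 (sat_Box _ _ _ _ _) Hbox z Hyz Hz).
  - intros H y Hy. apply sat_Box. intros z Hyz Hz. exact (H y z Hy Hz Hyz).
Qed.

Lemma sat_alpha_R V x : sat R_gt1 V x alpha <->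
  (forall y z, V 0%nat y \/ V 1%nat y -> V 0%nat z \/ V 1%nat z -> ~ R_gt1 y z) /\
  (exists z, V 0%nat z) /\ (exists z, V 1%nat z) /\
  (forall y z, sat R_gt1 V y (T 1) -> sat R_gt1 V z (T 1) -> ~ R_gt1 y z) /\
  (exists z, sat R_gt1 V z (T 1)) /\ (exists z, sat R_gt1 V z (T 2)).
Proof.
  unfold alpha. rewrite !sat_And, !sat_Narrow_R, !sat_Dia2_R.
  setoid_rewrite sat_Or. reflexivity.
Qed.

Definition is_inf (A : R -> Prop) (u : R) : Prop :=
  (forall y, A y -> u <= y) /\ (forall e, 0 < e -> exists y, A y /\ y < u + e).

Lemma is_inf_greatest A u l : is_inf A u -> (forall y, A y -> l <= y) -> l <= u.
Proof.
  intros [_ Happrox] Hl. apply Rnot_lt_le; intro Hu.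
  destruct (Happrox (l - u)) as [y [Hy Hyu]]; [lra|]. specialize (Hl y Hy). lra.
Qed.

Lemma is_inf_exists A y0 l : A y0 -> (forall y, A y -> l <= y) -> exists u, is_inf A u.
Proof.
  intros Hy0 Hl.
  destruct (completeness (fun z => A (- z))) as [s [Hub Hleast]].
  - exists (- l). intros z Hz. specialize (Hl _ Hz). lra.
  - exists (- y0). rewrite Ropp_involutive. exact Hy0.
  - exists (- s). split.
    + intros y Hy. assert (- y <= s) by (apply Hub; rewrite Ropp_involutive; exact Hy). lra.
    + intros e He. apply NNPP; intro Hno.
      assert (Hub' : is_upper_bound (fun z => A (- z)) (s - e)).
      { intros z Hz. apply Rnot_lt_le; intro Hzs.
        apply Hno. exists (- z). split; [exact Hz | lra]. }
      specialize (Hleast _ Hub'). lra.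
Qed.

Definition spans (A : R -> Prop) (u v : R) : Prop := is_inf A u /\ forall y, A y -> y <= v.

Lemma spans_interval (A : R -> Prop) u v : u < v ->
  (forall x, A x <-> u < x <= v) -> spans A u v.
Proof.
  intros Huv HA. repeat split.
  - intros y Hy. apply HA in Hy. lra.
  - intros e He. destruct (Rle_dec e (v - u)).
    + exists (u + e / 2). rewrite HA. split; lra.
    + exists v. rewrite HA. split; lra.
  - intros y Hy. apply HA in Hy. lra.
Qed.

Lemma close_to_interval x v w : v < w ->
  (forall y, v < y <= w -> ~ R_gt1 x y) -> w - 1 <= x <= v + 1.
Proof.
  intros Hvw Hclose. pose proof (Hclose w ltac:(lra)) as Hw. apply not_R_gt1_iff in Hw.
  split; [lra|]. apply Rnot_lt_le; intro Hx.
  destruct (Rle_dec (x - 1) w).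
  - apply (Hclose ((v + x - 1) / 2)); [lra | apply R_gt1_iff; lra].
  - apply (Hclose w); [lra | apply R_gt1_iff; lra].
Qed.

Lemma next_interval (A B : R -> Prop) u v : u < v < u + 1 -> spans A u v ->
  (forall y, B y <-> v < y <= u + 1) ->
  forall x, ((forall y, R_gt1 x y -> ~ B y) /\ ~ B x /\ exists y, R_gt1 x y /\ A y) <->
            u + 1 < x <= v + 1.
Proof.
  intros Huv [[Hlow Happrox] Hup] HB x. split.
  - intros [Hclose [_ [y [Hxy Hy]]]].
    assert (Hx : u + 1 - 1 <= x <= v + 1).
    { apply close_to_interval; [lra|]. intros z Hz Hxz. apply (Hclose z Hxz), HB, Hz. }
    specialize (Hlow y Hy). specialize (Hup y Hy). apply R_gt1_iff in Hxy. lra.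
  - intros Hx. split; [|split].
    + intros y Hxy Hy. apply HB in Hy. apply R_gt1_iff in Hxy. lra.
    + rewrite HB. lra.
    + destruct (Happrox (x - 1 - u)) as [y [Hy Hyu]]; [lra|].
      exists y. split; [apply R_gt1_iff; lra | exact Hy].
Qed.

Section Walk.
Variables (V : nat -> R -> Prop) (a b : R).
Local Notation inT k x := (sat R_gt1 V x (T k)).

Hypothesis V01_narrow :
  forall y z, V 0%nat y \/ V 1%nat y -> V 0%nat z \/ V 1%nat z -> ~ R_gt1 y z.
Hypothesis T1_narrow : forall y z, inT 1 y -> inT 1 z -> ~ R_gt1 y z.
Hypothesis T2_nonempty : exists z, inT 2 z.
Hypothesis V1_inf : is_inf (V 1%nat) a.
Hypothesis V0_inf : is_inf (V 0%nat) b.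
Hypothesis T1_right_of_V1 : exists x y, inT 1 x /\ V 1%nat y /\ y + 1 < x.

Lemma V0_le z : V 0%nat z -> z <= a + 1.
Proof.
  intro Hz. enough (z - 1 <= a) by lra. apply (is_inf_greatest _ _ _ V1_inf).
  intros y Hy. apply not_R_gt1_iff, (V01_narrow z y); auto.
Qed.

Lemma V1_le y : V 1%nat y -> y <= b + 1.
Proof.
  intro Hy. enough (y - 1 <= b) by lra. apply (is_inf_greatest _ _ _ V0_inf).
  intros z Hz. apply not_R_gt1_iff, (V01_narrow y z); auto.
Qed.

Lemma T1_le x : inT 1 x -> x <= b + 1.
Proof.
  intro Hx. enough (x - 1 <= b) by lra. apply (is_inf_greatest _ _ _ V0_inf).
  intros z Hz. apply sat_T1 in Hx as [Hclose _].
  enough (~ R_gt1 x z) by (apply not_R_gt1_iff in H; lra).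
  intro Hxz. exact (Hclose z Hxz Hz).
Qed.

Lemma a_lt_b : a < b.
Proof.
  destruct T1_right_of_V1 as [x [y [Hx [Hy Hyx]]]].
  pose proof (T1_le x Hx). pose proof (proj1 V1_inf y Hy). lra.
Qed.

Lemma T1_of_interval x : a + 1 < x <= b + 1 -> inT 1 x.
Proof.
  intro Hx. apply sat_T1. split.
  - intros z Hxz Hz. pose proof (proj1 V0_inf z Hz). pose proof (V0_le z Hz).
    apply R_gt1_iff in Hxz. lra.
  - destruct (proj2 V1_inf (x - 1 - a)) as [y [Hy Hya]]; [lra|].
    exists y. split; [apply R_gt1_iff; lra | exact Hy].
Qed.

Lemma T1_gt x : inT 1 x -> a + 1 < x.
Proof.
  intro Hx. pose proof Hx as Hx'. apply sat_T1 in Hx' as [_ [y [Hxy Hy]]].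
  apply R_gt1_iff in Hxy as [Hyx | Hxy].
  - pose proof (proj1 V1_inf y Hy). lra.
  - exfalso. pose proof (V1_le y Hy). pose proof a_lt_b.
    apply (T1_narrow x (b + 1) Hx); [apply T1_of_interval; lra | apply R_gt1_iff; lra].
Qed.

Lemma T1_interval x : inT 1 x <-> a + 1 < x <= b + 1.
Proof.
  split; [|apply T1_of_interval].
  intro Hx. split; [apply T1_gt | apply T1_le]; exact Hx.
Qed.

(* Otherwise V0 = {a + 1} and T1 = (a + 1, a + 2], so a point of T2 would have to be a + 1,
   which is within distance 1 of V0. *)
Lemma b_lt_a1 : b < a + 1.
Proof.
  apply Rnot_le_lt; intro Hba. pose proof a_lt_b.
  destruct T2_nonempty as [x Hx]. apply sat_TSS in Hx as [Hclose [HnT1 [z [Hxz Hz]]]].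
  assert (Hx : b + 1 - 1 <= x <= a + 1 + 1).
  { apply close_to_interval; [lra|]. intros y Hy Hxy. apply (Hclose y Hxy), T1_interval, Hy. }
  rewrite T1_interval in HnT1.
  pose proof (proj1 V0_inf z Hz). pose proof (V0_le z Hz).
  apply R_gt1_iff in Hxz. lra.
Qed.

Fixpoint endpoint (k : nat) : R :=
  match k with
  | 0 => b
  | 1 => a + 1
  | S (S k) => endpoint k + 1
  end.

Lemma endpoint_step k : endpoint k < endpoint (S k) < endpoint k + 1.
Proof.
  induction k as [|k IH].
  - pose proof a_lt_b. pose proof b_lt_a1. simpl. lra.
  - change (endpoint (S (S k))) with (endpoint k + 1). lra.
Qed.

Lemma endpoint_le i j : (i <= j)%nat -> endpoint i <= endpoint j.
Proof. induction 1 as [|j _ IH]; [lra|]. pose proof (endpoint_step j). lra. Qed.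

Lemma T_interval k : spans (fun x => inT k x) (endpoint k) (endpoint (S k)) /\
  forall x, inT (S k) x <-> endpoint (S k) < x <= endpoint (S (S k)).
Proof.
  induction k as [|k [Hspan Hint]].
  - split; [split; [exact V0_inf | exact V0_le] | exact T1_interval].
  - split.
    + apply spans_interval; [apply endpoint_step | exact Hint].
    + intro x. rewrite sat_TSS.
      apply (next_interval (fun y => inT k y) (fun y => inT (S k) y)); auto using endpoint_step.
Qed.

Lemma T_nonempty k : exists x, inT (S k) x.
Proof.
  exists (endpoint (S (S k))). apply T_interval. pose proof (endpoint_step (S k)). lra.
Qed.

Lemma T_disjoint j k x : inT (S j) x -> inT (S k) x -> j = k.
Proof.
  assert (Hsep : forall j k, (j < k)%nat -> inT (S j) x -> inT (S k) x -> False).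
  { intros j' k' Hjk Hj Hk. apply T_interval in Hj, Hk.
    pose proof (endpoint_le (S (S j')) (S k') ltac:(lia)). lra. }
  intros Hj Hk. destruct (Nat.lt_trichotomy j k) as [H|[H|H]]; eauto; exfalso; eauto.
Qed.

End Walk.

Definition disjoint_layers (V : nat -> R -> Prop) : Prop :=
  (forall k, exists x, sat R_gt1 V x (T (S k))) /\
  (forall j k x, sat R_gt1 V x (T (S j)) -> sat R_gt1 V x (T (S k)) -> j = k).

Lemma alpha_disjoint_layers_oriented V x : sat R_gt1 V x alpha ->
  (exists x1 y, sat R_gt1 V x1 (T 1) /\ V 1%nat y /\ y + 1 < x1) -> disjoint_layers V.
Proof.
  intros Halpha Horient. apply sat_alpha_R in Halpha
    as (Hnarrow & [z0 Hz0] & [z1 Hz1] & HT1narrow & _ & HT2).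
  assert (Hlow : forall y, V 0%nat y \/ V 1%nat y -> z1 - 1 <= y).
  { intros y Hy. enough (~ R_gt1 z1 y) by (apply not_R_gt1_iff in H; lra).
    apply Hnarrow; auto. }
  destruct (is_inf_exists (V 1%nat) z1 (z1 - 1)) as [a Ha]; [exact Hz1 | auto |].
  destruct (is_inf_exists (V 0%nat) z0 (z1 - 1)) as [b Hb]; [exact Hz0 | auto |].
  split; [intro k | intros j k y].
  - apply (T_nonempty V a b); eauto.
  - apply (T_disjoint V a b); eauto.
Qed.

Lemma disjoint_layers_reflect V : disjoint_layers (fun k z => V k (- z)) -> disjoint_layers V.
Proof.
  intros [Hne Hdisj]. split.
  - intro k. destruct (Hne k) as [x Hx]. exists (- x).
    apply sat_reflect in Hx; auto using vars_below_T.
  - intros j k x Hj Hk. apply (Hdisj j k (- x)); apply sat_reflect; try apply vars_below_T;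
      rewrite Ropp_involutive; assumption.
Qed.

Lemma alpha_disjoint_layers V x : sat R_gt1 V x alpha -> disjoint_layers V.
Proof.
  intro Halpha. pose proof Halpha as H. apply sat_alpha_R in H as (_ & _ & _ & _ & [x1 Hx1] & _).
  pose proof Hx1 as H. apply sat_T1 in H as [_ [y [Hx1y Hy]]].
  apply R_gt1_iff in Hx1y as [Hleft | Hright].
  - apply (alpha_disjoint_layers_oriented V x Halpha). exists x1, y. repeat split; auto; lra.
  - apply disjoint_layers_reflect, (alpha_disjoint_layers_oriented _ (- x)).
    + apply sat_reflect; [exact vars_below_alpha|]. rewrite Ropp_involutive. exact Halpha.
    + exists (- x1), (- y). rewrite sat_reflect by apply vars_below_T.
      rewrite !Ropp_involutive. repeat split; auto; lra.
Qed.

Definition cell (i : nat) : form := Var (S (S i)).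

Definition Cover (n : nat) : form := Box2 (Disj (map cell (seq 0 n))).

Definition decides (i : nat) (p : form) : form :=
  Or (Box2 (Imp (cell i) p)) (Box2 (Imp (cell i) (Neg p))).

Definition Pure (n : nat) : form :=
  Conj (map (fun ik => decides (fst ik) (Var (snd ik))) (list_prod (seq 0 n) (seq 0 2))).

Definition Hom (n : nat) : form :=
  Conj (map (fun ij => Imp (Dia2 (And (cell (fst ij)) (Dia (cell (snd ij)))))
                           (Box2 (Imp (cell (fst ij)) (Dia (cell (snd ij))))))
            (list_prod (seq 0 n) (seq 0 n))).

Definition Cells (n : nat) : form := And (Cover n) (And (Pure n) (Hom n)).

Definition psi (n : nat) : form := Neg (And (Cells n) alpha).

Lemma in_grid i j n m : (i < n)%nat -> (j < m)%nat -> In (i, j) (list_prod (seq 0 n) (seq 0 m)).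
Proof. intros Hi Hj. apply in_prod; apply in_seq; lia. Qed.

Definition cell_set (V : nat -> R -> Prop) (n i : nat) (y : R) : Prop :=
  (i < n)%nat /\ V (S (S i)) y.

Lemma sat_Cells_R V x n : sat R_gt1 V x (Cells n) ->
  (forall y, exists i, cell_set V n i y) /\
  (forall i k y z, (k < 2)%nat ->
     cell_set V n i y -> cell_set V n i z -> V k y -> V k z) /\
  (forall i j y z, cell_set V n i y -> cell_set V n i z ->
     (exists y', R_gt1 y y' /\ cell_set V n j y') ->
     exists z', R_gt1 z z' /\ cell_set V n j z').
Proof.
  unfold Cells, cell_set. rewrite !sat_And. intros [Hcover [Hpure Hhom]]. split; [|split].
  - intro y. unfold Cover in Hcover. rewrite sat_Box2_R in Hcover.
    specialize (Hcover y). apply sat_Disj in Hcover as [f [Hf Hy]].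
    apply in_map_iff in Hf as [i [<- Hi]]. apply in_seq in Hi. exists i. split; [lia | exact Hy].
  - intros i k y z Hk [Hi Hy] [_ Hz] Hky. unfold Pure in Hpure. rewrite sat_Conj in Hpure.
    specialize (Hpure _ (in_map _ _ (i, k) (in_grid i k n 2 Hi Hk))).
    unfold decides in Hpure. cbn [fst snd] in Hpure. rewrite sat_Or, !sat_Box2_R in Hpure.
    destruct Hpure as [Hin | Hout].
    + exact (Hin z Hz).
    + exfalso. exact (Hout y Hy Hky).
  - intros i j y z [Hi Hy] [_ Hz] [y' [Hyy' [Hj Hy']]].
    unfold Hom in Hhom. rewrite sat_Conj in Hhom.
    specialize (Hhom _ (in_map _ _ (i, j) (in_grid i j n n Hi Hj))).
    cbn [fst snd] in Hhom.
    assert (Hall : sat R_gt1 V x (Box2 (Imp (cell i) (Dia (cell j))))).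
    { apply Hhom, sat_Dia2_R. exists y. apply sat_And. split; [exact Hy | exists y'; auto]. }
    rewrite sat_Box2_R in Hall. destruct (Hall z Hz) as [z' [Hzz' Hz']].
    exists z'. repeat split; auto.
Qed.

Lemma psi_valid_R n : Log_gt1_R (psi n).
Proof.
  intros V x Hx. apply sat_And in Hx as [Hcells Halpha].
  destruct (sat_Cells_R V x n Hcells) as (Hcover & Hpure & Hhom).
  destruct (alpha_disjoint_layers V x Halpha) as [Hne Hdisj].
  apply (finite_cover_disjoint_family R n (cell_set V n)
           (fun k y => sat R_gt1 V y (T (S k)))); auto.
  - intro y. destruct (Hcover y) as [i Hi]. exists i. split; [apply Hi | exact Hi].
  - intros k i y z Hy Hz.
    apply (sat_same_cell R R_gt1 V 2 (cell_set V n) Hpure Hhom) with (i := i);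
      auto using vars_below_T.
Qed.

Lemma sat_Cells_singletons (X : Type) (Rel : X -> X -> Prop) (V : nat -> X -> Prop) n w :
  (forall x, exists i, (i < n)%nat /\ V (S (S i)) x) ->
  (forall i x y, V (S (S i)) x -> V (S (S i)) y -> x = y) ->
  sat Rel V w (Cells n).
Proof.
  intros Hcover Hsingle. unfold Cells. rewrite !sat_And. split; [|split].
  - apply sat_Box2_of_all. intro z. apply sat_Disj. destruct (Hcover z) as [i [Hi Hz]].
    exists (cell i). split; [apply in_map, in_seq; lia | exact Hz].
  - apply sat_Conj. intros f Hf. apply in_map_iff in Hf as [[i k] [<- _]]. cbn [fst snd].
    unfold decides. apply sat_Or.
    destruct (classic (exists z, V (S (S i)) z /\ V k z)) as [[z [Hz Hkz]] | Hnone];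
      [left | right]; apply sat_Box2_of_all; intros y Hy.
    + rewrite (Hsingle i y z Hy Hz). exact Hkz.
    + intro Hky. apply Hnone. exists y. split; assumption.
  - apply sat_Conj. intros f Hf. apply in_map_iff in Hf as [[i j] [<- _]]. cbn [fst snd].
    intro Hdia. apply sat_Dia2_ex in Hdia as [z Hz]. apply sat_And in Hz as [Hz Hzj].
    apply sat_Box2_of_all. intros y Hy. rewrite (Hsingle i y z Hy Hz). exact Hzj.
Qed.

Definition extend_val (X : Type) (V C : nat -> X -> Prop) (k : nat) : X -> Prop :=
  match k with
  | S (S i) => C i
  | _ => V k
  end.

Lemma finite_frame_refutes_alpha (X : Type) (Rel : X -> X -> Prop) (l : list X) :
  (forall x, In x l) -> (forall f, Log_gt1_R f -> valid Rel f) ->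
  forall V w, ~ sat Rel V w alpha.
Proof.
  intros Hl HLog V w Halpha.
  set (W := extend_val X V (fun i x => nth_error l i = Some x)).
  apply (HLog _ (psi_valid_R (length l)) W w), sat_And. split.
  - apply sat_Cells_singletons.
    + intro x. destruct (In_nth_error l x (Hl x)) as [i Hi]. exists i. split; [|exact Hi].
      apply nth_error_Some. rewrite Hi. discriminate.
    + intros i x y Hx Hy. cbn in Hx, Hy. congruence.
  - apply (sat_agree X Rel V W 2); [|exact vars_below_alpha | exact Halpha].
    intros [|[|k]] y Hk; [reflexivity | reflexivity | lia].
Qed.

Definition V_model (k : nat) (x : R) : Prop :=
  match k with
  | 0 => x = 1 / 2
  | 1 => x = 0
  | _ => False
  end.

Lemma sat_T1_model x : sat R_gt1 V_model x (T 1) <-> 1 < x <= 3 / 2.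
Proof.
  rewrite sat_T1. cbn [V_model]. split.
  - intros [Hclose [y [Hxy ->]]].
    assert (H : ~ R_gt1 x (1 / 2)) by (intro H; exact (Hclose _ H eq_refl)).
    apply not_R_gt1_iff in H. apply R_gt1_iff in Hxy. lra.
  - intros Hx. split.
    + intros y Hxy ->. apply R_gt1_iff in Hxy. lra.
    + exists 0. split; [apply R_gt1_iff; lra | reflexivity].
Qed.

Lemma sat_alpha_model : sat R_gt1 V_model 0 alpha.
Proof.
  apply sat_alpha_R. cbn [V_model]. repeat split.
  - intros y z [-> | ->] [-> | ->]; apply not_R_gt1_iff; lra.
  - exists (1 / 2). reflexivity.
  - exists 0. reflexivity.
  - intros y z Hy Hz. rewrite sat_T1_model in Hy, Hz. apply not_R_gt1_iff. lra.
  - exists (3 / 2). apply sat_T1_model. lra.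
  - exists (7 / 4). apply sat_TSS. rewrite sat_T1_model. split; [|split].
    + intros y Hxy Hy. apply sat_T1_model in Hy. apply R_gt1_iff in Hxy. lra.
    + lra.
    + exists (1 / 2). split; [apply R_gt1_iff; lra | reflexivity].
Qed.

Theorem theorem5p8 :
  exists phi : form,
    ~ Log_gt1_R phi /\
    forall (X : Type) (Rel : X -> X -> Prop),
      finite_type X ->
      (forall psi : form, Log_gt1_R psi -> valid Rel psi) ->
      valid Rel phi.
Proof.
  exists (Neg alpha). split.
  - intro Hvalid. exact (Hvalid V_model 0 sat_alpha_model).
  - intros X Rel [l Hl] HLog V w. exact (finite_frame_refutes_alpha X Rel l Hl HLog V w).
Qed.
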